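(* Let $\mu>0$. Define $$N'=\sup_{\tau\in\mathcal{R}_{part,conv,rate}}\ \inf_{\alpha\in(0,\infty)}\varphi(\tau,\alpha),\qquad V=\sup_{\tau\in\mathcal{R}_{part,conv,rate}}\ \inf_{\alpha\in(0,\infty)}\ \inf_{\lambda\ge0}L_1(\tau,\lambda,\alpha),$$ where for $\tau=((R_p,R_c),\Sigma_p,\Sigma_{c,p},Q,\Sigma_{c,c})$, $\varphi(\tau,\alpha)=\mu R_p+R_c$ if $\mathrm{Tr}(\Sigma_p)+\alpha\mathrm{Tr}(\Sigma_{c,p})+\alpha\mathrm{Tr}(\Sigma_{c,c})\le P_p+\alpha P_c$ and $\varphi(\tau,\alpha)=-\infty$ otherwise, and $L_1(\tau,\lambda,\alpha)=\mu R_p+R_c-\lambda\big(\mathrm{Tr}(\Sigma_p)+\alpha\mathrm{Tr}(\Sigma_{c,p})+\alpha\mathrm{Tr}(\Sigma_{c,c})-P_p-\alpha P_c\big)$. Then $N'=V$.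
   Context: Fixed complex matrices $H_{p,p}\in\mathbb{C}^{n_{p,r}\times n_{p,t}}$, $H_{c,p}\in\mathbb{C}^{n_{p,r}\times n_{c,t}}$, $H_{c,c}\in\mathbb{C}^{n_{c,r}\times n_{c,t}}$, powers $P_p,P_c>0$, $G=[H_{p,p}\ \ H_{c,p}]$. $\mathcal{R}_{part,conv,rate}$ is the set of tuples $((R_p,R_c),\Sigma_p,\Sigma_{c,p},Q,\Sigma_{c,c})$ with $R_p,R_c\ge0$, $\Sigma_p\succeq0$ ($n_{p,t}\times n_{p,t}$), $\Sigma_{c,p},\Sigma_{c,c}\succeq0$ ($n_{c,t}\times n_{c,t}$), $Q\in\mathbb{C}^{n_{p,t}\times n_{c,t}}$, $Q_p=\begin{pmatrix}\Sigma_p&Q\\Q^\dagger&\Sigma_{c,p}\end{pmatrix}\succeq0$, $R_p\le\log|I+GQ_pG^\dagger+H_{c,p}\Sigma_{c,c}H_{c,p}^\dagger|-\log|I+H_{c,p}\Sigma_{c,c}H_{c,p}^\dagger|$, $R_c\le\log|I+H_{c,c}\Sigma_{c,c}H_{c,c}^\dagger|$. (In the paper $\alpha$ ranges over the compactification $\mathbb{R}^+\cup\{0,\infty\}$; here it is taken in $(0,\infty)$ where all expressions are defined.) *)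

From Stdlib Require Import Reals Lra ClassicalEpsilon.
Open Scope R_scope.

Record C := mkC { Cre : R ; Cim : R }.
Definition C0 : C := mkC 0 0.
Definition C1 : C := mkC 1 0.
Definition Cadd (a b : C) : C := mkC (Cre a + Cre b) (Cim a + Cim b).
Definition Copp (a : C) : C := mkC (- Cre a) (- Cim a).
Definition Cmul (a b : C) : C :=
  mkC (Cre a * Cre b - Cim a * Cim b) (Cre a * Cim b + Cim a * Cre b).
Definition Cconj (a : C) : C := mkC (Cre a) (- Cim a).

Fixpoint Csum (n : nat) (f : nat -> C) : C :=
  match n with O => C0 | S k => Cadd (Csum k f) (f k) end.

(* ---------- complex matrices ----------
   A matrix is a function of (row, column) indices; dimensions are carried
   by the operations; entries outside the index range are never used. *)
Definition Mat := nat -> nat -> C.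

Definition madd (A B : Mat) : Mat := fun i j => Cadd (A i j) (B i j).
Definition mmul (k : nat) (A B : Mat) : Mat :=
  fun i j => Csum k (fun l => Cmul (A i l) (B l j)).
Definition adj (A : Mat) : Mat := fun i j => Cconj (A j i).
Definition ident : Mat := fun i j => if Nat.eqb i j then C1 else C0.

Definition minor0 (j : nat) (A : Mat) : Mat :=
  fun r c => A (S r) (if Nat.ltb c j then c else S c).
Fixpoint det (n : nat) (A : Mat) : C :=
  match n with
  | O => C1
  | S m => Csum (S m) (fun j =>
             Cmul (if Nat.even j then C1 else Copp C1)
                  (Cmul (A O j) (det m (minor0 j A))))
  end.

(* log|A| for an n x n Hermitian positive definite A (whose determinant is
   real and positive): natural log of the (real) determinant *)
Definition logdet (n : nat) (A : Mat) : R := ln (Cre (det n A)).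

(* trace (real part; the trace of a Hermitian matrix is real) *)
Fixpoint Rsum (n : nat) (f : nat -> R) : R :=
  match n with O => 0 | S k => Rsum k f + f k end.
Definition tr (n : nat) (A : Mat) : R := Rsum n (fun i => Cre (A i i)).

Definition psd (n : nat) (A : Mat) : Prop :=
  (forall i j, (i < n)%nat -> (j < n)%nat -> A i j = Cconj (A j i)) /\
  (forall v : nat -> C,
     0 <= Cre (Csum n (fun i => Csum n (fun j =>
                 Cmul (Cconj (v i)) (Cmul (A i j) (v j)))))).

Definition hcat (k : nat) (A B : Mat) : Mat :=
  fun i j => if Nat.ltb j k then A i j else B i (j - k)%nat.
(* ( S  Q ; Q^dagger  T ) with S of size k x k *)
Definition blk (k : nat) (S Q T : Mat) : Mat :=
  fun i j =>
    if Nat.ltb i k then (if Nat.ltb j k then S i j else Q i (j - k)%nat)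
    else (if Nat.ltb j k then Cconj (Q j (i - k)%nat) else T (i - k)%nat (j - k)%nat).

Inductive Rbar := Fin (r : R) | PInf | MInf.
Definition Rbar_le (x y : Rbar) : Prop :=
  match x, y with
  | MInf, _ => True
  | _, PInf => True
  | Fin a, Fin b => a <= b
  | _, _ => False
  end.
Definition is_lub (S : Rbar -> Prop) (s : Rbar) : Prop :=
  (forall x, S x -> Rbar_le x s) /\
  (forall u, (forall x, S x -> Rbar_le x u) -> Rbar_le s u).
Definition is_glb (S : Rbar -> Prop) (s : Rbar) : Prop :=
  (forall x, S x -> Rbar_le s x) /\
  (forall u, (forall x, S x -> Rbar_le u x) -> Rbar_le u s).
Definition Rbar_sup (S : Rbar -> Prop) : Rbar :=
  epsilon (inhabits MInf) (is_lub S).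
Definition Rbar_inf (S : Rbar -> Prop) : Rbar :=
  epsilon (inhabits PInf) (is_glb S).

Record Tau := mkTau {
  tRp : R ; tRc : R ;
  tSp : Mat ;   (* Sigma_p      : n_pt x n_pt *)
  tScp : Mat ;  (* Sigma_{c,p}  : n_ct x n_ct *)
  tQ : Mat ;    (* Q            : n_pt x n_ct *)
  tScc : Mat    (* Sigma_{c,c}  : n_ct x n_ct *)
}.

Definition in_region (npr npt nct ncr : nat) (Hpp Hcp Hcc : Mat) (t : Tau)
  : Prop :=
  let G := hcat npt Hpp Hcp in
  let Qp := blk npt (tSp t) (tQ t) (tScp t) in
  let Icc := mmul nct (mmul nct Hcp (tScc t)) (adj Hcp) in
  0 <= tRp t /\ 0 <= tRc t /\
  psd npt (tSp t) /\ psd nct (tScp t) /\ psd nct (tScc t) /\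
  psd (npt + nct) Qp /\
  tRp t <= logdet npr (madd (madd ident
              (mmul (npt + nct) (mmul (npt + nct) G Qp) (adj G))) Icc)
           - logdet npr (madd ident Icc) /\
  tRc t <= logdet ncr (madd ident
              (mmul nct (mmul nct Hcc (tScc t)) (adj Hcc))).

Definition slack (npt nct : nat) (Pp Pc : R) (t : Tau) (alpha : R) : R :=
  tr npt (tSp t) + alpha * tr nct (tScp t) + alpha * tr nct (tScc t)
  - Pp - alpha * Pc.

Definition phi (npt nct : nat) (mu Pp Pc : R) (t : Tau) (alpha : R) : Rbar :=
  if Rle_dec (tr npt (tSp t) + alpha * tr nct (tScp t)
              + alpha * tr nct (tScc t)) (Pp + alpha * Pc)
  then Fin (mu * tRp t + tRc t) else MInf.

Definition L1 (npt nct : nat) (mu Pp Pc : R) (t : Tau) (lam alpha : R) : R :=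
  mu * tRp t + tRc t - lam * slack npt nct Pp Pc t alpha.

From Stdlib Require Import Reals Lra ClassicalEpsilon FunctionalExtensionality PropExtensionality.
Open Scope R_scope.

(* The theorem is Lagrangian duality for a single scalar constraint, applied
   pointwise.  For a fixed rate tuple t and weight alpha, the Lagrangian
   L1 t lam alpha = mu Rp + Rc - lam * slack is affine in lam, so its infimum
   over lam >= 0 is mu Rp + Rc (attained at lam = 0) when slack <= 0, and -oo
   when slack > 0 (let lam grow).  That is exactly phi t alpha.  Hence the
   inner infima over lam can be replaced by phi inside both the infimum over
   alpha and the supremum over t, and the two sides coincide. *)

Lemma Rbar_le_antisym (x y : Rbar) : Rbar_le x y -> Rbar_le y x -> x = y.
Proof. destruct x, y; simpl; intros; try tauto; f_equal; lra. Qed.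

Lemma Rbar_inf_glb (S : Rbar -> Prop) (s : Rbar) : is_glb S s -> Rbar_inf S = s.
Proof.
  intros [s_lb s_greatest]. unfold Rbar_inf.
  destruct (epsilon_spec (inhabits PInf) (is_glb S)
              (ex_intro _ s (conj s_lb s_greatest))) as [i_lb i_greatest].
  apply Rbar_le_antisym; [apply s_greatest | apply i_greatest]; assumption.
Qed.

Lemma Rbar_inf_ext (S T : Rbar -> Prop) :
  (forall x, S x <-> T x) -> Rbar_inf S = Rbar_inf T.
Proof.
  intros HST. f_equal. apply functional_extensionality; intro x.
  apply propositional_extensionality, HST.
Qed.

Lemma Rbar_sup_ext (S T : Rbar -> Prop) :
  (forall x, S x <-> T x) -> Rbar_sup S = Rbar_sup T.
Proof.
  intros HST. f_equal. apply functional_extensionality; intro x.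
  apply propositional_extensionality, HST.
Qed.

Definition penalized (a s : R) (w : Rbar) : Prop :=
  exists lam, 0 <= lam /\ w = Fin (a - lam * s).

Lemma inf_penalized_feasible (a s : R) :
  s <= 0 -> Rbar_inf (penalized a s) = Fin a.
Proof.
  intros Hs. apply Rbar_inf_glb. split.
  - intros x [lam [Hlam ->]]. simpl.
    assert (lam * s <= 0) by (pose proof (Rmult_le_compat_l lam s 0 Hlam Hs); lra).
    lra.
  - intros u Hu.
    specialize (Hu (Fin (a - 0 * s)) (ex_intro _ 0 (conj (Rle_refl 0) eq_refl))).
    now replace (a - 0 * s) with a in Hu by ring.
Qed.

(* With a violated constraint (s > 0) the penalized values are unbounded
   below: lam = (|a - b| + 1) / s pushes below any finite b. *)
Lemma inf_penalized_violated (a s : R) :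
  0 < s -> Rbar_inf (penalized a s) = MInf.
Proof.
  intros Hs. apply Rbar_inf_glb. split.
  - intros x _. destruct x; exact I.
  - intros u Hu. destruct u as [b| |]; simpl; auto.
    + set (lam := (Rabs (a - b) + 1) / s).
      assert (Hlam : 0 <= lam).
      { unfold lam. apply Rle_mult_inv_pos; [pose proof (Rabs_pos (a - b)); lra | lra]. }
      specialize (Hu _ (ex_intro _ lam (conj Hlam eq_refl))). simpl in Hu.
      assert (lam * s = Rabs (a - b) + 1) by (unfold lam; field; lra).
      pose proof (Rle_abs (a - b)). lra.
    + exact (Hu _ (ex_intro _ 0 (conj (Rle_refl 0) eq_refl))).
Qed.

Lemma Lagrangian_inf_eq_phi (npt nct : nat) (mu Pp Pc : R) (t : Tau) (alpha : R) :
  Rbar_inf (fun w => exists lam, 0 <= lam /\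
                 w = Fin (L1 npt nct mu Pp Pc t lam alpha))
  = phi npt nct mu Pp Pc t alpha.
Proof.
  change (Rbar_inf (penalized (mu * tRp t + tRc t)
                              (slack npt nct Pp Pc t alpha))
          = phi npt nct mu Pp Pc t alpha).
  unfold phi, slack.
  destruct (Rle_dec _ _) as [Hfeas | Hviol].
  - apply inf_penalized_feasible. lra.
  - apply inf_penalized_violated. lra.
Qed.

Theorem lemma6p4 (npr npt nct ncr : nat) (Hpp Hcp Hcc : Mat) (Pp Pc mu : R)
  (hPp : 0 < Pp) (hPc : 0 < Pc) (hmu : 0 < mu) :
  Rbar_sup (fun y => exists t, in_region npr npt nct ncr Hpp Hcp Hcc t /\
     y = Rbar_inf (fun z => exists alpha, 0 < alpha /\
            z = phi npt nct mu Pp Pc t alpha))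
  =
  Rbar_sup (fun y => exists t, in_region npr npt nct ncr Hpp Hcp Hcc t /\
     y = Rbar_inf (fun z => exists alpha, 0 < alpha /\
            z = Rbar_inf (fun w => exists lam, 0 <= lam /\
                   w = Fin (L1 npt nct mu Pp Pc t lam alpha)))).
Proof.
  assert (inf_alpha_eq : forall t,
    Rbar_inf (fun z => exists alpha, 0 < alpha /\
                z = phi npt nct mu Pp Pc t alpha)
    = Rbar_inf (fun z => exists alpha, 0 < alpha /\
                z = Rbar_inf (fun w => exists lam, 0 <= lam /\
                       w = Fin (L1 npt nct mu Pp Pc t lam alpha)))).
  { intro t. apply Rbar_inf_ext; intro z.
    setoid_rewrite Lagrangian_inf_eq_phi. reflexivity. }
  apply Rbar_sup_ext; intro y.
  setoid_rewrite inf_alpha_eq. reflexivity.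
Qed.
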